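(* Let $\hat{\mathbf{Z}}\in\mathbb{R}^{d\times d}$ be symmetric with $\hat{\mathbf{Z}}_{J,J}=\hat{\mathbf{z}}\hat{\mathbf{z}}^\top$. Suppose: (1) either $\mathrm{sign}(u_{1,i})=\mathrm{sign}(\hat x_i)$ for all $i\in J$, or $\mathrm{sign}(u_{1,i})=-\mathrm{sign}(\hat x_i)$ for all $i\in J$; (2) $(\mathbf{M}_{J^c,J}-\rho\hat{\mathbf{Z}}_{J^c,J})\hat{\mathbf{x}}=0$ and $\|\hat{\mathbf{Z}}_{J^c,J}\|_{\max}<1$; (3) $\lambda_1(\mathbf{M}_{J,J}-\rho\hat{\mathbf{z}}\hat{\mathbf{z}}^\top)=\lambda_1(\mathbf{M}-\rho\hat{\mathbf{Z}})$ and $\|\hat{\mathbf{Z}}_{J^c,J^c}\|_{\max}<1$; (4) $\lambda_1(\mathbf{M}_{J,J}-\rho\hat{\mathbf{z}}\hat{\mathbf{z}}^\top)>\lambda_2(\mathbf{M}_{J,J}-\rho\hat{\mathbf{z}}\hat{\mathbf{z}}^\top)$. Then the matrix $\hat{\mathbf{X}}$ with $\hat{\mathbf{X}}_{J,J}=\hat{\mathbf{x}}\hat{\mathbf{x}}^\top$ and zeros elsewhere is the unique optimal solution of the SDP problem, and $\mathrm{supp}(\mathrm{diag}(\hat{\mathbf{X}}))=J$.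
   Context: Setup. Let $d\ge2$. $\mathbf{M}^*\in\mathbb{R}^{d\times d}$ is symmetric with $\lambda_1(\mathbf{M}^* )>\lambda_2(\mathbf{M}^* )$; $\mathbf{u}_1$ is a unit eigenvector for $\lambda_1(\mathbf{M}^* )$; $J=\{i:u_{1,i}\ne0\}$, $s=|J|\ge2$, $J^c=[d]\setminus J$. $\mathbf{M}\in\mathbb{R}^{d\times d}$ is any symmetric matrix (the observed matrix), and $\rho>0$. For a symmetric matrix, $\lambda_k$ is its $k$-th largest eigenvalue. Sub-matrices $\mathbf{B}_{I,K}$ are rows in $I$, columns in $K$; $\|\mathbf{B}\|_{\max}=\max_{i,j}|B_{i,j}|$, $\|\mathbf{B}\|_{1,1}=\sum_{i,j}|B_{i,j}|$; $\mathrm{sign}(0)=0$. SDP problem: maximize $\langle\mathbf{M},\mathbf{X}\rangle-\rho\|\mathbf{X}\|_{1,1}$ over symmetric $\mathbf{X}\succeq0$ with $\mathrm{tr}(\mathbf{X})=1$. Witness objects: $\hat{\mathbf{z}}\in\mathbb{R}^J$ with $\hat z_i=\mathrm{sign}(u_{1,i})$; $\hat{\mathbf{x}}\in\mathbb{R}^J$ is a unit leading eigenvector of $\mathbf{M}_{J,J}-\rho\hat{\mathbf{z}}\hat{\mathbf{z}}^\top$. *)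

From HB Require Import structures.
From mathcomp Require Import all_boot all_order all_algebra.
From mathcomp Require Import reals.
From Stdlib Require Import ClassicalEpsilon.
Set Implicit Arguments. Unset Strict Implicit. Unset Printing Implicit Defensive.
Import Order.TTheory GRing.Theory Num.Theory.
Local Open Scope ring_scope.

Section Defs.
Variable R : realType.

(* The k-th element (0-based) of the subset J of 'I_d, in increasing order. *)
Definition subidx (d : nat) (J : {set 'I_d}) (k : 'I_#|J|) : 'I_d := enum_val k.

Definition subM (d : nat) (B : 'M[R]_d) (I K : {set 'I_d}) : 'M[R]_(#|I|, #|K|) :=
  \matrix_(i < #|I|, j < #|K|) B (subidx i) (subidx j).

Definition is_spectrum (n : nat) (A : 'M[R]_n) (s : seq R) : Prop :=
  sorted (fun x y => y <= x) s /\ char_poly A = \prod_(x <- s) ('X - x%:P).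

Definition eigs (n : nat) (A : 'M[R]_n) : seq R :=
  epsilon (inhabits [::]) (is_spectrum A).

(* lam k A = k-th largest eigenvalue (k >= 1) *)
Definition lam (k : nat) (n : nat) (A : 'M[R]_n) : R := nth 0 (eigs A) k.-1.

Definition psd (n : nat) (X : 'M[R]_n) : Prop :=
  forall v : 'cV[R]_n, 0 <= (v^T *m X *m v) 0 0.

Definition sdp_feasible (n : nat) (X : 'M[R]_n) : Prop :=
  X^T = X /\ psd X /\ \tr X = 1.

Definition sdp_obj (n : nat) (M : 'M[R]_n) (rho : R) (X : 'M[R]_n) : R :=
  \sum_i \sum_j M i j * X i j - rho * \sum_i \sum_j `|X i j|.

Definition unique_optimal (n : nat) (M : 'M[R]_n) (rho : R) (X : 'M[R]_n) : Prop :=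
  sdp_feasible X /\
  forall Y : 'M[R]_n, sdp_feasible Y -> Y <> X -> sdp_obj M rho Y < sdp_obj M rho X.

End Defs.

(* The matrix [Zhat] is a dual certificate.  With [B := M - rho Zhat] the
   objective is [<B, Y> - rho * sum_ij (|Y_ij| - Zhat_ij Y_ij)]; the penalty is
   nonnegative because [|Zhat_ij| <= 1], and [<B, Y> <= lam_1(B) tr Y] for
   positive semidefinite [Y].  At [Xhat] the sign condition kills the penalty
   and [<B, Xhat> = xhat^T A xhat = lam_1(A) = lam_1(B)] for
   [A := M_JJ - rho zhat zhat^T], so [Xhat] is optimal.  An optimal [Y] has no
   penalty, hence vanishes where [|Zhat_ij| < 1], i.e. off [J x J]; its [J x J]
   block is a unit-trace positive semidefinite matrix on which [A] attains
   [lam_1(A)], and the gap [lam_2(A) < lam_1(A)] leaves only [xhat xhat^T].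
   Eigenvalue bounds come from a real decomposition [A = sum_i d_i E_i] with
   positive semidefinite [E_i] summing to the identity, read off the unitary
   diagonalisation of [A] over [R[i]]. *)

From HB Require Import structures.
From mathcomp Require Import all_boot all_order all_algebra.
From mathcomp Require Import reals ring lra.
From mathcomp.real_closed Require Import complex.
From Stdlib Require Import ClassicalEpsilon.
Import Order.TTheory GRing.Theory Num.Theory.
Set Implicit Arguments. Unset Strict Implicit. Unset Printing Implicit Defensive.
Local Open Scope ring_scope.

Section Frobenius.
Variable R : realType.
Implicit Types n : nat.

Definition frob n (A B : 'M[R]_n) : R := \sum_j \sum_l A j l * B j l.

Lemma frobC n (A B : 'M[R]_n) : frob A B = frob B A.
Proof. by apply: eq_bigr => j _; apply: eq_bigr => l _; rewrite mulrC. Qed.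

Lemma frob_suml n m (F : 'I_m -> 'M[R]_n) (B : 'M[R]_n) :
  frob (\sum_i F i) B = \sum_i frob (F i) B.
Proof.
rewrite /frob [RHS]exchange_big; apply: eq_bigr => j _.
rewrite [RHS]exchange_big; apply: eq_bigr => l _.
by rewrite summxE mulr_suml.
Qed.

Lemma frobZl n (a : R) (A B : 'M[R]_n) : frob (a *: A) B = a * frob A B.
Proof.
rewrite /frob mulr_sumr; apply: eq_bigr => j _; rewrite mulr_sumr.
by apply: eq_bigr => l _; rewrite mxE mulrA.
Qed.

Lemma frobDr n (A B B' : 'M[R]_n) : frob A (B + B') = frob A B + frob A B'.
Proof.
rewrite /frob -big_split; apply: eq_bigr => j _; rewrite -big_split.
by apply: eq_bigr => l _; rewrite mxE mulrDr.
Qed.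

Lemma frob1l n (Y : 'M[R]_n) : frob 1%:M Y = \tr Y.
Proof.
apply: eq_bigr => j _; rewrite (bigD1 j) //= mxE eqxx mul1r big1 ?addr0 //.
by move=> l /negPf; rewrite mxE eq_sym => ->; rewrite mul0r.
Qed.

Lemma quad_formE n (Y : 'M[R]_n) (v : 'cV[R]_n) :
  (v^T *m Y *m v) 0 0 = \sum_j \sum_l v j 0 * Y j l * v l 0.
Proof.
rewrite mxE; under eq_bigr => l _ do rewrite mxE mulr_suml.
rewrite exchange_big; apply: eq_bigr => j _; apply: eq_bigr => l _.
by rewrite !mxE.
Qed.

Lemma outerE n (v : 'cV[R]_n) j l : (v *m v^T) j l = v j 0 * v l 0.
Proof. by rewrite mxE big_ord1 !mxE. Qed.

Lemma frob_outer n (Y : 'M[R]_n) (v : 'cV[R]_n) :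
  frob Y (v *m v^T) = (v^T *m Y *m v) 0 0.
Proof.
rewrite quad_formE; apply: eq_bigr => j _; apply: eq_bigr => l _.
by rewrite outerE; ring.
Qed.

End Frobenius.

Section SymmetricSpectral.
Variable R : realType.
Local Notation C := R[i].
Local Notation cR := (real_complex R).
Local Open Scope sesquilinear_scope.

Lemma conj_cR (a : R) : Num.conj (cR a) = cR a.
Proof. exact: conjc_real. Qed.

Lemma sym_unitary_diag n (A : 'M[R]_n) : A^T = A ->
  exists (P : 'M[C]_n) (d : 'I_n -> R),
   [/\ P *m P^t* = 1%:M, P^t* *m P = 1%:M &
       map_mx cR A = P^t* *m diag_mx (\row_i cR (d i)) *m P].
Proof.
move=> hA; set Ac := map_mx cR A.
have hH : Ac \is hermsymmx.
  rewrite qualifE /= expr0 scale1r; apply/eqP/matrixP => i j.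
  by rewrite !mxE conj_cR -{1}hA mxE.
have /orthomx_spectralP hE := hermitian_normalmx hH.
have hU := spectral_unitarymx Ac.
have hr := hermitian_spectral_diag_real hH.
set P := spectralmx Ac in hE hU *; set sp := spectral_diag Ac in hE hr *.
have hd : sp = \row_i cR (complex.Re (sp 0 i)).
  apply/rowP => i; rewrite mxE.
  have /mxOverP/(_ 0 i)/Creal_ImP := hr; rewrite -complexIm.
  by case: (sp 0 i) => a b /= [->].
exists P, (fun i => complex.Re (sp 0 i)); split.
- exact/unitarymxP.
- by rewrite -invmx_unitary // mulVmx // unitarymx_unit.
- by rewrite -(invmx_unitary hU) -hd.
Qed.

Lemma Re_sum (I : Type) (r : seq I) (P : pred I) (F : I -> C) :
  complex.Re (\sum_(i <- r | P i) F i) = \sum_(i <- r | P i) complex.Re (F i).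
Proof.
elim/big_rec2: _ => //= i x z _ <-.
by case: (F i) => a b; case: z.
Qed.

Lemma Re_mulR (z : C) (x : R) : complex.Re (z * cR x) = complex.Re z * x.
Proof. by case: z => a b /=; ring. Qed.

Lemma Re_conjM (p q : C) :
  complex.Re (Num.conj p * q) = complex.Re p * complex.Re q + complex.Im p * complex.Im q.
Proof. by case: p => a b; case: q => c e /=; ring. Qed.

Lemma unitary_diag_entry n (P : 'M[C]_n) (c : 'I_n -> C) j l :
  (P^t* *m diag_mx (\row_i c i) *m P) j l = \sum_i Num.conj (P i j) * c i * P i l.
Proof. by rewrite mul_mx_diag mxE; apply: eq_bigr => i _; rewrite !mxE. Qed.

Definition spec_proj n (P : 'M[C]_n) (i : 'I_n) : 'M[R]_n :=
  \matrix_(j, l) complex.Re (Num.conj (P i j) * P i l).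

Lemma spec_projE n (P : 'M[C]_n) i :
  spec_proj P i = (\col_j complex.Re (P i j)) *m (\col_j complex.Re (P i j))^T
                + (\col_j complex.Im (P i j)) *m (\col_j complex.Im (P i j))^T.
Proof. by apply/matrixP => j l; rewrite [RHS]mxE !outerE !mxE Re_conjM. Qed.

Lemma frob_spec_proj_ge0 n (Y : 'M[R]_n) (P : 'M[C]_n) i :
  psd Y -> 0 <= frob Y (spec_proj P i).
Proof. by move=> hY; rewrite spec_projE frobDr !frob_outer addr_ge0. Qed.

Lemma spec_proj_sum n (P : 'M[C]_n) :
  P^t* *m P = 1%:M -> \sum_i spec_proj P i = 1%:M.
Proof.
move=> /matrixP hP; apply/matrixP => j l; have := hP j l.
rewrite summxE !mxE => /(congr1 (@complex.Re R)); rewrite Re_sum => hjl.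
have -> : (j == l)%:R = complex.Re ((j == l)%:R : C) by case: (j == l).
by rewrite -hjl; apply: eq_bigr => i _; rewrite !mxE.
Qed.

Section UnitaryDiag.
Variables (n : nat) (A : 'M[R]_n) (P : 'M[C]_n) (d : 'I_n -> R).
Hypotheses (hPP : P *m P^t* = 1%:M) (hPtP : P^t* *m P = 1%:M).
Hypothesis hA : map_mx cR A = P^t* *m diag_mx (\row_i cR (d i)) *m P.

Lemma unitary_diag_sum : A = \sum_i d i *: spec_proj P i.
Proof.
apply/matrixP => j l; move/matrixP/(_ j l): hA.
rewrite mxE unitary_diag_entry => /(congr1 (@complex.Re R)) /= ->.
rewrite summxE Re_sum; apply: eq_bigr => i _.
by rewrite !mxE mulrAC Re_mulR mulrC.
Qed.

Lemma unitary_diag_char_poly : char_poly A = \prod_i ('X - (d i)%:P).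
Proof.
apply: (@map_poly_inj _ _ cR).
rewrite map_char_poly hA rmorph_prod /=.
under [RHS]eq_bigr => i _ do rewrite map_polyXsubC.
set D := diag_mx _.
have -> : \prod_i ('X - (cR (d i))%:P) = char_poly D.
  rewrite char_poly_trig ?diag_mx_is_trig //; apply: eq_bigr => i _.
  by rewrite /D !mxE eqxx mulr1n.
rewrite /char_poly /char_poly_mx !map_mxM.
set Q' := map_mx polyC (P^t*); set P' := map_mx polyC P.
have hQP : Q' *m P' = 1%:M by rewrite -map_mxM hPtP map_mx1.
have {1}-> : 'X%:M = Q' *m 'X%:M *m P' :> 'M[{poly C}]_n.
  by rewrite mul_mx_scalar -scalemxAl hQP scalemx1.
rewrite -mulmxBl -mulmxBr !det_mulmx mulrC mulrA -det_mulmx.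
by rewrite [P' *m Q']mulmx1C // det1 mul1r.
Qed.

(* A unit eigenvector for a simple eigenvalue [d k] is, up to a unit complex
   factor, the conjugate of row [k] of [P]. *)
Lemma unitary_diag_eigvec (x : 'cV[R]_n) (lam : R) (k : 'I_n) :
  A *m x = lam *: x -> \sum_j x j 0 ^+ 2 = 1 ->
  (forall i, i != k -> d i != lam) -> spec_proj P k = x *m x^T.
Proof.
move=> hAx hxn hdk.
have hPA : P *m map_mx cR A = diag_mx (\row_i cR (d i)) *m P.
  by rewrite hA !mulmxA hPP mul1mx.
set xc := map_mx cR x; set w := P *m xc.
have hDw : diag_mx (\row_i cR (d i)) *m w = cR lam *: w.
  by rewrite /w mulmxA -hPA -mulmxA -map_mxM hAx map_mxZ -scalemxAr.
have hw i : i != k -> w i 0 = 0.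
  move=> hik; move/matrixP: hDw => /(_ i 0).
  rewrite mul_diag_mx !mxE => /eqP; rewrite -subr_eq0 -mulrBl mulf_eq0.
  case/orP => [|/eqP //].
  by rewrite -rmorphB fmorph_eq0 subr_eq0 (negPf (hdk i hik)).
have hx j : xc j 0 = Num.conj (P k j) * w k 0.
  have -> : xc = P^t* *m w by rewrite /w mulmxA hPtP mul1mx.
  rewrite mxE (bigD1 k) //= big1 ?addr0 ?mxE // => i hik.
  by rewrite hw // mulr0.
have hwn : Num.conj (w k 0) * w k 0 = 1.
  have : (w^t* *m w) 0 0 = (xc^t* *m xc) 0 0.
    by rewrite /w trmx_mul map_mxM mulmxA -[_ *m P^t* *m P]mulmxA hPtP mulmx1.
  rewrite !mxE (bigD1 k) //= big1 ?addr0; last by move=> i hik; rewrite hw // mulr0.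
  rewrite !mxE => ->.
  rewrite -(rmorph1 cR) -hxn rmorph_sum; apply: eq_bigr => j _.
  by rewrite !mxE conj_cR rmorphXn expr2.
apply/matrixP => j l; rewrite outerE mxE.
have : cR (x j 0 * x l 0) = Num.conj (P k j) * P k l.
  have -> : cR (x j 0 * x l 0) = xc j 0 * Num.conj (xc l 0).
    by rewrite !mxE conj_cR rmorphM.
  rewrite !hx rmorphM /= conjCK.
  by rewrite mulrCA !mulrA -[_ * Num.conj (w k 0)]mulrA [w k 0 * _]mulrC hwn mulr1 mulrC.
by move=> /(congr1 (@complex.Re R)) /= <-.
Qed.

End UnitaryDiag.

Lemma sym_spectral n (A : 'M[R]_n) : A^T = A ->
  exists (d : 'I_n -> R) (E : 'I_n -> 'M[R]_n),
  [/\ char_poly A = \prod_i ('X - (d i)%:P),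
      A = \sum_i d i *: E i, \sum_i E i = 1%:M,
      forall i (Y : 'M[R]_n), psd Y -> 0 <= frob Y (E i)
    & forall (x : 'cV[R]_n) lam k, A *m x = lam *: x -> \sum_j x j 0 ^+ 2 = 1 ->
        (forall i, i != k -> d i != lam) -> E k = x *m x^T].
Proof.
move=> /sym_unitary_diag [P [d [hPP hPtP hA]]].
exists d, (spec_proj P); split.
- exact: unitary_diag_char_poly hPtP hA.
- exact: unitary_diag_sum hA.
- exact: spec_proj_sum.
- by move=> i Y; apply: frob_spec_proj_ge0.
- by move=> x lam k; apply: unitary_diag_eigvec.
Qed.

End SymmetricSpectral.

Section Eigenvalues.
Variable R : realType.
Implicit Types n : nat.

Lemma eigs_perm n (A : 'M[R]_n) (d : 'I_n -> R) :
  char_poly A = \prod_i ('X - (d i)%:P) ->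
  sorted (fun x y => y <= x) (eigs A) /\ perm_eq (eigs A) [seq d i | i <- enum 'I_n].
Proof.
move=> hc.
have hprod : \prod_(x <- [seq d i | i <- enum 'I_n]) ('X - x%:P) = char_poly A.
  by rewrite big_map big_enum /= hc.
have hex : exists s, is_spectrum A s.
  exists (sort (fun x y => y <= x) [seq d i | i <- enum 'I_n]); split.
    by apply: sort_sorted => x y; rewrite le_total.
  by rewrite -hprod; apply: perm_big; rewrite perm_sym perm_sort.
have [hs hcs] := epsilon_spec (inhabits [::]) (is_spectrum A) hex.
by split=> //; apply: prod_XsubC_eq; rewrite -hcs hprod.
Qed.

Lemma sorted_ge_head (s : seq R) y :
  sorted (fun x y => y <= x) s -> y \in s -> y <= nth 0 s 0.
Proof.
case: s => [//|a s] /= hs; rewrite inE => /orP[/eqP->//|ys].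
have /allP := order_path_min (fun y x z (h1 : y <= x) (h2 : z <= y) => le_trans h2 h1) hs.
exact.
Qed.

Lemma lam1_ge n (A : 'M[R]_n) (d : 'I_n -> R) :
  char_poly A = \prod_i ('X - (d i)%:P) -> forall i, d i <= lam 1 A.
Proof.
move=> /eigs_perm [hs hp] i; apply: sorted_ge_head => //.
by rewrite (perm_mem hp) map_f ?mem_enum.
Qed.

Lemma lam_gap_index n (A : 'M[R]_n) (d : 'I_n -> R) :
  char_poly A = \prod_i ('X - (d i)%:P) -> lam 2 A < lam 1 A ->
  exists k, d k = lam 1 A /\ forall i, i != k -> d i <= lam 2 A.
Proof.
move=> /eigs_perm [hs hp]; rewrite /lam /=.
move: hs hp; case: (eigs A) => [|a s'] /=; first by rewrite ltxx.
move=> hs hp hgap; set b := nth 0 s' 0 in hgap *.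
have hall y : y \in s' -> y <= b by apply: sorted_ge_head; exact: path_sorted hs.
have hcnt : count (fun y => b < y) (a :: s') = 1%N.
  rewrite /= hgap add1n; congr S; apply/eqP; rewrite -leqn0 leqNgt -has_count.
  by apply/hasPn => y ys; rewrite -leNgt hall.
have /permP/(_ (fun y => b < y)) := hp; rewrite hcnt count_map.
rewrite -sum1_count big_enum_cond /= sum1_card => /esym/eqP/card1P [k hk].
have hbk : b < d k by have := hk k; rewrite !inE eqxx.
exists k; split.
  have : d k \in a :: s' by rewrite (perm_mem hp) map_f ?mem_enum.
  by rewrite inE => /orP[/eqP //|/hall]; rewrite leNgt hbk.
move=> i hik; rewrite leNgt; apply/negP => hbi.
by have := hk i; rewrite !unfold_in /= (negPf hik) => /negbT/negP; apply.
Qed.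

Lemma frob_le_lam1 n (A Y : 'M[R]_n) : A^T = A -> psd Y ->
  frob A Y <= lam 1 A * \tr Y.
Proof.
move=> hA hY; have [d [E [hc hAE hE1 hEpsd _]]] := sym_spectral hA.
rewrite {1}hAE -frob1l -hE1 !frob_suml mulr_sumr; apply: ler_sum => i _.
by rewrite frobZl ler_wpM2r ?(lam1_ge hc) // frobC hEpsd.
Qed.

Lemma frob_le_lam2 n (A Y : 'M[R]_n) (x : 'cV[R]_n) : A^T = A -> psd Y ->
  A *m x = lam 1 A *: x -> \sum_j x j 0 ^+ 2 = 1 -> lam 2 A < lam 1 A ->
  frob A Y <= lam 2 A * \tr Y + (lam 1 A - lam 2 A) * frob Y (x *m x^T).
Proof.
move=> hA hY hx hxn hgap; have [d [E [hc hAE hE1 hEpsd hEx]]] := sym_spectral hA.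
have [k [hk hlt]] := lam_gap_index hc hgap.
rewrite -(hEx x (lam 1 A) k) //; last first.
  by move=> i /hlt hi; rewrite lt_eqF // (le_lt_trans hi hgap).
have hr i : 0 <= frob (E i) Y by rewrite frobC hEpsd.
rewrite {1}hAE -frob1l -hE1 !frob_suml frobC.
under eq_bigr => i _ do rewrite frobZl.
rewrite (bigD1 k) // [\sum_i frob (E i) Y](bigD1 k) //= hk.
have : \sum_(i | i != k) d i * frob (E i) Y <= lam 2 A * \sum_(i | i != k) frob (E i) Y.
  by rewrite mulr_sumr; apply: ler_sum => i hik; rewrite ler_wpM2r ?hlt.
lra.
Qed.

End Eigenvalues.

Section RankOne.
Variable R : realType.
Variable n : nat.
Implicit Types (Y : 'M[R]_n) (u w : 'I_n -> R).

Definition bform Y u w := \sum_j \sum_l u j * Y j l * w l.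

Lemma bform_ge0 Y u : psd Y -> 0 <= bform Y u u.
Proof.
move=> /(_ (\col_i u i)); rewrite quad_formE /bform.
by under eq_bigr => j _ do under eq_bigr => l _ do rewrite !mxE.
Qed.

Lemma bformC Y u w : Y^T = Y -> bform Y u w = bform Y w u.
Proof.
move=> hY; rewrite /bform exchange_big; apply: eq_bigr => j _; apply: eq_bigr => l _.
by rewrite -{1}hY mxE mulrC [u l * _]mulrC mulrA.
Qed.

Lemma bform_shift Y u w (t : R) : Y^T = Y ->
  bform Y (fun j => w j + t * u j) (fun j => w j + t * u j) =
  bform Y w w + 2 * t * bform Y u w + t ^+ 2 * bform Y u u.
Proof.
move=> hY; have -> : 2 * t * bform Y u w = t * bform Y u w + t * bform Y w u.
  by rewrite (bformC _ _ hY); ring.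
rewrite /bform !mulr_sumr -!big_split; apply: eq_bigr => j _.
rewrite !mulr_sumr -!big_split; apply: eq_bigr => l _ /=; ring.
Qed.

(* Minimising the nonnegative quadratic [t |-> bform Y (w + t u) (w + t u)]
   with [u := Y w] forces [|Y w|^2 = bform Y u w = 0]. *)
Lemma psd_bform_eq0 Y w : Y^T = Y -> psd Y -> bform Y w w = 0 ->
  forall k, \sum_l Y k l * w l = 0.
Proof.
move=> hs hY hw.
pose u j := \sum_l Y j l * w l.
have ha : bform Y u w = \sum_j u j ^+ 2.
  rewrite /bform; apply: eq_bigr => j _; rewrite expr2 /u mulr_sumr.
  by apply: eq_bigr => l _; rewrite mulrA.
have hb : 0 <= bform Y u u by apply: bform_ge0.
set a := bform Y u w in ha; set b := bform Y u u in hb.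
have ht t : 0 <= 2 * t * a + t ^+ 2 * b.
  by have := bform_ge0 (fun j => w j + t * u j) hY; rewrite bform_shift // hw add0r.
have ha0 : a = 0.
  have hb1 : 0 < b + 1 by lra.
  have := ht (- a / (b + 1)); set t := - a / (b + 1).
  have -> : a = - t * (b + 1) by rewrite /t mulNr divfK ?opprK // gt_eqF.
  move=> h; have -> : t = 0 by nra.
  by rewrite oppr0 mul0r.
move=> k; move/eqP: ha; rewrite ha0 eq_sym psumr_eq0 => [|i _]; last exact: sqr_ge0.
by move=> /allP /(_ k (mem_index_enum _)); rewrite sqrf_eq0 => /eqP.
Qed.

Lemma sum_natr_eq_mul (F : 'I_n -> R) j : \sum_i (j == i)%:R * F i = F j.
Proof.
rewrite (bigD1 j) //= eqxx mul1r big1 ?addr0 // => i hij.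
by rewrite eq_sym (negPf hij) mul0r.
Qed.

(* [1 - x x^T] is idempotent for a unit vector [x]. *)
Lemma proj_compl_idem (x : 'I_n -> R) j l : \sum_j x j ^+ 2 = 1 ->
  \sum_i ((j == i)%:R - x i * x j) * ((l == i)%:R - x i * x l) =
  (j == l)%:R - x j * x l.
Proof.
move=> hx; under eq_bigr => i _ do rewrite mulrBl.
rewrite sumrB sum_natr_eq_mul.
have -> : \sum_i x i * x j * ((l == i)%:R - x i * x l) =
          x j * (\sum_i (l == i)%:R * x i - x l * \sum_i x i ^+ 2).
  by rewrite mulr_sumr -sumrB mulr_sumr; apply: eq_bigr => i _; ring.
by rewrite sum_natr_eq_mul hx mulr1 subrr mulr0 subr0 eq_sym.
Qed.

(* With [w_i := e_i - x_i x], the sum of the [w_i^T Y w_i] is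
   [tr Y - x^T Y x <= 0], so every [Y w_i] vanishes. *)
Lemma psd_trace1_rank1 Y (x : 'cV[R]_n) : Y^T = Y -> psd Y ->
  \tr Y = 1 -> \sum_j x j 0 ^+ 2 = 1 -> 1 <= frob Y (x *m x^T) -> Y = x *m x^T.
Proof.
move=> hs hY htr hx hq.
set q := frob Y (x *m x^T) in hq.
pose w i j := (j == i)%:R - x i 0 * x j 0.
have hS : \sum_i bform Y (w i) (w i) = \tr Y - q.
  transitivity (\sum_j \sum_l Y j l * ((j == l)%:R - x j 0 * x l 0)).
    rewrite exchange_big; apply: eq_bigr => j _.
    rewrite exchange_big; apply: eq_bigr => l _.
    rewrite -(proj_compl_idem j l hx) mulr_sumr.
    by apply: eq_bigr => i _; rewrite /w; ring.
  rewrite -frob1l /q /frob -sumrB; apply: eq_bigr => j _; rewrite -sumrB.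
  by apply: eq_bigr => l _; rewrite outerE mxE; ring.
have hw0 i : bform Y (w i) (w i) = 0.
  have hge i' : 0 <= bform Y (w i') (w i') by apply: bform_ge0.
  have /eqP : \sum_i bform Y (w i) (w i) = 0.
    by apply/le_anti; rewrite sumr_ge0 // andbT hS htr; lra.
  by rewrite psumr_eq0 // => /allP /(_ i (mem_index_enum _)) /eqP.
pose y k := \sum_l Y k l * x l 0.
have hYy i k : Y k i = x i 0 * y k.
  have := psd_bform_eq0 hs hY (hw0 i) k.
  under eq_bigr => l _ do rewrite /w mulrBr.
  rewrite sumrB; under eq_bigr => l _ do rewrite mulrC eq_sym.
  rewrite sum_natr_eq_mul => /eqP; rewrite subr_eq0 => /eqP ->.
  by rewrite /y mulr_sumr; apply: eq_bigr => l _; ring.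
have hxy i k : x i 0 * y k = x k 0 * y i by rewrite -!hYy -{1}hs mxE.
have hxq : \sum_i x i 0 * y i = q.
  rewrite /q frobC /frob; apply: eq_bigr => j _; rewrite /y mulr_sumr.
  by apply: eq_bigr => l _; rewrite outerE; ring.
have hyk k : y k = x k 0 * q.
  rewrite -hxq mulr_sumr -[y k]mulr1 -hx mulr_sumr; apply: eq_bigr => i _.
  by transitivity (x i 0 * (x i 0 * y k)); [ring | rewrite hxy; ring].
have hq1 : q = 1.
  rewrite -htr /mxtrace -[q]mulr1 -hx mulr_sumr; apply: eq_bigr => k _.
  by rewrite hYy hyk; ring.
by apply/matrixP => k l; rewrite outerE hYy hyk hq1; ring.
Qed.

End RankOne.

Lemma mem_subidx d (J : {set 'I_d}) (k : 'I_#|J|) : subidx k \in J.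
Proof. exact: enum_valP. Qed.

Lemma subidx_inj d (J : {set 'I_d}) : injective (@subidx d J).
Proof. exact: enum_val_inj. Qed.

Lemma subidx_onto d (J : {set 'I_d}) i : i \in J -> exists k : 'I_#|J|, subidx k = i.
Proof. by move=> hi; exists (enum_rank_in hi i); rewrite /subidx enum_rankK_in. Qed.

Section Submatrix.
Variables (R : realType) (d : nat) (J : {set 'I_d}).
Implicit Types (B X Y Z : 'M[R]_d).

Definition off_block i j := (i \notin J) || (j \notin J).

Lemma sum_subidx (F : 'I_d -> R) :
  (forall i, i \notin J -> F i = 0) -> \sum_i F i = \sum_(k < #|J|) F (subidx k).
Proof.
move=> hF; rewrite (bigID (mem J)) /= [X in _ + X]big1 ?addr0 //.
by rewrite big_enum_val.
Qed.

Lemma sum2_subidx (F : 'I_d -> 'I_d -> R) :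
  (forall i j, off_block i j -> F i j = 0) ->
  \sum_i \sum_j F i j = \sum_(k < #|J|) \sum_(l < #|J|) F (subidx k) (subidx l).
Proof.
move=> hF; rewrite sum_subidx => [|i hi]; last first.
  by apply: big1 => j _; rewrite hF ?/off_block ?hi.
by apply: eq_bigr => k _; apply: sum_subidx => j hj; rewrite hF ?/off_block ?hj ?orbT.
Qed.

Lemma block_eq X Y : (forall i j, off_block i j -> X i j = 0) ->
  (forall i j, off_block i j -> Y i j = 0) -> subM X J J = subM Y J J -> X = Y.
Proof.
move=> hX hY /matrixP hXY; apply/matrixP => i j.
case: (boolP (off_block i j)) => [h|]; first by rewrite hX ?hY.
rewrite negb_or !negbK => /andP[/subidx_onto[k <-] /subidx_onto[l <-]].
by have := hXY k l; rewrite !mxE.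
Qed.

Lemma subMBZ B Z (c : R) : subM (B - c *: Z) J J = subM B J J - c *: subM Z J J.
Proof. by apply/matrixP => k l; rewrite !mxE. Qed.

Lemma subM_sym Y : Y^T = Y -> (subM Y J J)^T = subM Y J J.
Proof. by move=> hY; apply/matrixP => k l; rewrite !mxE -{1}hY mxE. Qed.

Lemma psd_subM Y : psd Y -> psd (subM Y J J).
Proof.
move=> hY v'.
pose v : 'cV[R]_d := \col_i \sum_(k < #|J|) (subidx k == i)%:R * v' k 0.
have hv1 k : v (subidx k) 0 = v' k 0.
  rewrite mxE (bigD1 k) //= eqxx mul1r big1 ?addr0 // => m hm.
  by rewrite (inj_eq (@subidx_inj _ _)) (negPf hm) mul0r.
have hv0 i : i \notin J -> v i 0 = 0.
  move=> hi; rewrite mxE big1 // => m _; case: eqP => [he|]; last by rewrite mul0r.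
  by move: hi; rewrite -he mem_subidx.
suff -> : (v'^T *m subM Y J J *m v') 0 0 = (v^T *m Y *m v) 0 0 by apply: hY.
rewrite !quad_formE [RHS]sum2_subidx => [|i j /orP[hi|hj]].
- by apply: eq_bigr => k _; apply: eq_bigr => l _; rewrite !hv1 mxE.
- by rewrite hv0 // !mul0r.
- by rewrite (hv0 j) // mulr0.
Qed.

Lemma frob_subM B Y : (forall i j, off_block i j -> Y i j = 0) ->
  frob (subM B J J) (subM Y J J) = frob B Y.
Proof.
move=> hY; rewrite /frob [RHS]sum2_subidx => [|i j h]; last by rewrite hY ?mulr0.
by apply: eq_bigr => k _; apply: eq_bigr => l _; rewrite !mxE.
Qed.

Lemma trace_subM Y : (forall i j, off_block i j -> Y i j = 0) ->
  \tr (subM Y J J) = \tr Y.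
Proof.
move=> hY; rewrite /mxtrace [RHS]sum_subidx => [|i hi]; last by rewrite hY ?/off_block ?hi.
by apply: eq_bigr => k _; rewrite mxE.
Qed.

Lemma off_block_norm_lt1 Z : Z^T = Z ->
  (forall p q, `|subM Z (~: J) J p q| < 1) ->
  (forall p q, `|subM Z (~: J) (~: J) p q| < 1) ->
  forall i j, off_block i j -> `|Z i j| < 1.
Proof.
move=> hZ hCJ hCC.
have hC i j : i \notin J -> j \in J -> `|Z i j| < 1.
  rewrite -in_setC => /subidx_onto[p <-] /subidx_onto[q <-].
  by have := hCJ p q; rewrite mxE.
move=> i j; rewrite /off_block.
case: (boolP (i \in J)) => hi; case: (boolP (j \in J)) => hj //= _.
- by rewrite -hZ mxE hC.
- exact: hC.
- move: hi hj; rewrite -!in_setC => /subidx_onto[p <-] /subidx_onto[q <-].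
  by have := hCC p q; rewrite mxE.
Qed.

Lemma diag_support X :
  (forall k : 'I_#|J|, X (subidx k) (subidx k) != 0) ->
  (forall i j, off_block i j -> X i j = 0) ->
  [set i | X i i != 0] = J.
Proof.
move=> hJ hX; apply/setP => i; rewrite inE; case: (boolP (i \in J)) => hi.
  by have [k <-] := subidx_onto hi; rewrite hJ.
by rewrite hX ?eqxx ?/off_block ?hi.
Qed.

End Submatrix.

Section L1Excess.
Variable R : realType.
Implicit Types (n : nat).

Definition l1_excess n (Z Y : 'M[R]_n) := \sum_i \sum_j (`|Y i j| - Z i j * Y i j).

Lemma sdp_objE n (M Z Y : 'M[R]_n) (rho : R) :
  sdp_obj M rho Y = frob (M - rho *: Z) Y - rho * l1_excess Z Y.
Proof.
rewrite /sdp_obj /frob /l1_excess !mulr_sumr -!sumrB; apply: eq_bigr => i _.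
by rewrite !mulr_sumr -!sumrB; apply: eq_bigr => j _; rewrite !mxE; ring.
Qed.

Lemma l1_excess_term_ge0 (z y : R) : `|z| <= 1 -> 0 <= `|y| - z * y.
Proof.
move=> hz; rewrite subr_ge0; apply: le_trans (ler_norm _) _.
by rewrite normrM ler_piMl.
Qed.

Lemma l1_excess_ge0 n (Z Y : 'M[R]_n) : (forall i j, `|Z i j| <= 1) ->
  0 <= l1_excess Z Y.
Proof. by move=> hZ; do 2!apply: sumr_ge0 => ? _; exact: l1_excess_term_ge0. Qed.

Lemma l1_excess_eq0 n (Z Y : 'M[R]_n) : (forall i j, `|Z i j| <= 1) ->
  l1_excess Z Y = 0 -> forall i j, `|Z i j| < 1 -> Y i j = 0.
Proof.
move=> hZ; rewrite /l1_excess => /eqP; rewrite psumr_eq0 => [|i _]; last first.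
  by apply: sumr_ge0 => j _; exact: l1_excess_term_ge0.
move=> /allP h i j hZij; have /= := h i (mem_index_enum _).
rewrite psumr_eq0 => [/allP /(_ j (mem_index_enum _)) /= /eqP hij|k _]; last first.
  exact: l1_excess_term_ge0.
have : `|Y i j| <= `|Z i j| * `|Y i j|.
  by rewrite -normrM; apply: le_trans (ler_norm _); lra.
by move=> hle; apply: normr0_eq0; have := normr_ge0 (Y i j); nra.
Qed.

End L1Excess.

Section DualCertificate.
Variables (R : realType) (d : nat) (J : {set 'I_d}).
Variables (M Z X : 'M[R]_d) (rho : R) (x : 'cV[R]_#|J|).
Hypotheses (hM : M^T = M) (hZ : Z^T = Z) (hrho : 0 < rho).
Hypothesis hZ1 : forall i j, `|Z i j| <= 1.
Hypothesis hZoff : forall i j, off_block J i j -> `|Z i j| < 1.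
Hypothesis hZX : l1_excess Z X = 0.
Hypothesis hXJJ : forall k l, X (subidx k) (subidx l) = x k 0 * x l 0.
Hypothesis hX0 : forall i j, off_block J i j -> X i j = 0.
Hypothesis hxn : \sum_k x k 0 ^+ 2 = 1.
Let B := M - rho *: Z.
Let A := subM B J J.
Hypotheses (hxe : A *m x = lam 1 A *: x) (hlam : lam 1 A = lam 1 B).
Hypothesis hgap : lam 2 A < lam 1 A.

Let hB : B^T = B.
Proof. by rewrite /B linearB linearZ /= hM hZ. Qed.

Let subM_X : subM X J J = x *m x^T.
Proof. by apply/matrixP => k l; rewrite outerE mxE hXJJ. Qed.

Lemma certificate_feasible : sdp_feasible X.
Proof.
split; [|split].
- apply: (block_eq (J := J)) hX0 _ => [i j h|].
    by rewrite mxE hX0 // /off_block orbC.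
  by apply/matrixP => k l; rewrite !mxE !hXJJ mulrC.
- move=> v; rewrite quad_formE (sum2_subidx (J := J)) => [|i j /hX0 ->]; last first.
    by rewrite mulr0 mul0r.
  have -> : \sum_(k < #|J|) \sum_(l < #|J|)
               v (subidx k) 0 * X (subidx k) (subidx l) * v (subidx l) 0
           = (\sum_(k < #|J|) v (subidx k) 0 * x k 0) ^+ 2.
    rewrite expr2 mulr_suml; apply: eq_bigr => k _; rewrite mulr_sumr.
    by apply: eq_bigr => l _; rewrite hXJJ; ring.
  exact: sqr_ge0.
- rewrite -(trace_subM hX0) subM_X -hxn; apply: eq_bigr => k _.
  by rewrite outerE expr2.
Qed.

Lemma certificate_obj : sdp_obj M rho X = lam 1 A.
Proof.
rewrite (sdp_objE _ Z) hZX mulr0 subr0 -(frob_subM _ hX0) subM_X frob_outer -/A.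
rewrite -mulmxA hxe -scalemxAr mxE -[RHS]mulr1 -hxn mxE; congr (_ * _).
by apply: eq_bigr => k _; rewrite mxE expr2.
Qed.

Lemma sdp_obj_le_certificate (Y : 'M[R]_d) : sdp_feasible Y ->
  frob B Y <= lam 1 A /\ sdp_obj M rho Y <= frob B Y.
Proof.
move=> [_ [hY hYt]]; split; first by rewrite hlam -[lam 1 B]mulr1 -hYt frob_le_lam1.
rewrite (sdp_objE _ Z) gerBl; apply: mulr_ge0; [exact: ltW | exact: l1_excess_ge0].
Qed.

Lemma certificate_optimal_eq (Y : 'M[R]_d) : sdp_feasible Y ->
  sdp_obj M rho Y = lam 1 A -> Y = X.
Proof.
move=> hYf heq; have [hle1 hle2] := sdp_obj_le_certificate hYf.
have [hYs [hY hYt]] := hYf.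
have hex0 : l1_excess Z Y = 0.
  apply/le_anti; rewrite l1_excess_ge0 // andbT -(pmulr_rle0 _ hrho).
  by move: hle1 hle2 heq; rewrite (sdp_objE _ Z) -/B; lra.
have hY0 i j : off_block J i j -> Y i j = 0.
  by move=> /hZoff; exact: l1_excess_eq0 hZ1 hex0 i j.
have hBY : frob A (subM Y J J) = lam 1 A.
  by rewrite frob_subM //; move: hle1 hle2 heq; rewrite (sdp_objE _ Z) -/B hex0; lra.
have hq : 1 <= frob (subM Y J J) (x *m x^T).
  have := frob_le_lam2 (subM_sym J hB) (psd_subM (J := J) hY) hxe hxn hgap.
  rewrite -/A hBY trace_subM // hYt => hle.
  have hpos : 0 < lam 1 A - lam 2 A by rewrite subr_gt0.
  by rewrite -subr_ge0 -(pmulr_rge0 _ hpos); lra.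
apply: (block_eq (J := J) hY0 hX0); rewrite subM_X.
apply: psd_trace1_rank1 (subM_sym J hYs) (psd_subM hY) _ hxn hq.
by rewrite (trace_subM hY0).
Qed.

Theorem certificate_unique_optimal : unique_optimal M rho X.
Proof.
split; first exact: certificate_feasible.
move=> Y hYf hne; rewrite certificate_obj lt_neqAle.
have [hle1 hle2] := sdp_obj_le_certificate hYf.
rewrite (le_trans hle2 hle1) andbT; apply/eqP => /(certificate_optimal_eq hYf).
exact: hne.
Qed.

End DualCertificate.

Section SignPattern.
Variables (R : realType) (n : nat) (u x : 'I_n -> R).
Hypothesis hux : (forall k, Num.sg (u k) = Num.sg (x k)) \/
                 (forall k, Num.sg (u k) = - Num.sg (x k)).

Lemma sg_agree_normM k l : `|x k * x l| = Num.sg (u k) * Num.sg (u l) * (x k * x l).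
Proof. by rewrite normrM !normrEsg; case: hux => h; rewrite !h; ring. Qed.

Lemma sg_agree_neq0 k : u k != 0 -> x k != 0.
Proof.
rewrite -sgr_eq0 => hu; rewrite -sgr_eq0.
by case: hux hu => ->; rewrite ?oppr_eq0.
Qed.

End SignPattern.

Theorem mainTheorem4 (R : realType) (d : nat) (hd : (2 <= d)%N)
  (Mstar : 'M[R]_d) (hMs : Mstar^T = Mstar)
  (hgap : lam 2 Mstar < lam 1 Mstar)
  (u1 : 'cV[R]_d) (hu1 : Mstar *m u1 = lam 1 Mstar *: u1)
  (hu1n : \sum_i u1 i 0 ^+ 2 = 1)
  (J : {set 'I_d}) (hJ : J = [set i | u1 i 0 != 0]) (hs : (2 <= #|J|)%N)
  (M : 'M[R]_d) (hM : M^T = M) (rho : R) (hrho : 0 < rho)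
  (zhat : 'cV[R]_#|J|) (hz : forall k, zhat k 0 = Num.sg (u1 (subidx k) 0))
  (xhat : 'cV[R]_#|J|) (hxn : \sum_k xhat k 0 ^+ 2 = 1)
  (hxe : (subM M J J - rho *: (zhat *m zhat^T)) *m xhat
           = lam 1 (subM M J J - rho *: (zhat *m zhat^T)) *: xhat)
  (Zhat : 'M[R]_d) (hZs : Zhat^T = Zhat)
  (hZJJ : subM Zhat J J = zhat *m zhat^T)
  (h1 : (forall k, Num.sg (u1 (subidx k) 0) = Num.sg (xhat k 0)) \/
        (forall k, Num.sg (u1 (subidx k) 0) = - Num.sg (xhat k 0)))
  (h2a : (subM M (~: J) J - rho *: subM Zhat (~: J) J) *m xhat = 0)
  (h2b : forall i j, `|subM Zhat (~: J) J i j| < 1)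
  (h3a : lam 1 (subM M J J - rho *: (zhat *m zhat^T)) = lam 1 (M - rho *: Zhat))
  (h3b : forall i j, `|subM Zhat (~: J) (~: J) i j| < 1)
  (h4 : lam 2 (subM M J J - rho *: (zhat *m zhat^T))
          < lam 1 (subM M J J - rho *: (zhat *m zhat^T)))
  (Xhat : 'M[R]_d)
  (hXJJ : forall k l, Xhat (subidx k) (subidx l) = xhat k 0 * xhat l 0)
  (hX0 : forall i j, (i \notin J) || (j \notin J) -> Xhat i j = 0) :
  unique_optimal M rho Xhat /\ [set i | Xhat i i != 0] = J.
Proof.
have hu (k : 'I_#|J|) : u1 (subidx k) 0 != 0.
  by have := mem_subidx k; rewrite [in X in _ \in X]hJ inE.
have hZJ k l : Zhat (subidx k) (subidx l) = zhat k 0 * zhat l 0.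
  by move/matrixP/(_ k l): hZJJ; rewrite mxE outerE.
have hZoff := off_block_norm_lt1 hZs h2b h3b.
have hA : subM (M - rho *: Zhat) J J = subM M J J - rho *: (zhat *m zhat^T).
  by rewrite subMBZ hZJJ.
rewrite -hA in hxe h3a h4.
split; last first.
  apply: diag_support hX0 => k.
  by rewrite hXJJ mulf_neq0 // (sg_agree_neq0 h1 (hu k)).
apply: (certificate_unique_optimal hM hZs hrho _ hZoff _ hXJJ hX0 hxn hxe h3a h4).
- move=> i j; case: (boolP (off_block J i j)) => [/hZoff/ltW //|].
  rewrite negb_or !negbK => /andP[/subidx_onto[k <-] /subidx_onto[l <-]].
  by rewrite hZJ normrM !hz !normr_sg !hu mulr1.
- rewrite /l1_excess (sum2_subidx (J := J)) => [|i j /hX0 ->]; last first.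
    by rewrite normr0 mulr0 subrr.
  apply: big1 => k _; apply: big1 => l _.
  by rewrite hXJJ (sg_agree_normM h1) hZJ !hz subrr.
Qed.
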